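(* Let $\mathcal{S}$ be a temporal feedback graph on $T$ rounds with maximal orders $C_1,\dots,C_N$, and let $\boldsymbol\mu^*$ be any optimal solution to the upper bound dual program. Let $\mathcal{C}(\boldsymbol\mu^* )\subseteq[N]$ be the set of $c$ with $\sum_{t\in C_c}(\mu^*_t)^2=1$. Then there exists a subset $\mathcal{B}\subseteq\mathcal{C}(\boldsymbol\mu^* )$ with $|\mathcal{B}|\le T$ and an optimal solution $\boldsymbol\lambda^*$ of the upper bound program such that $\lambda^*_{c,t}=0$ for all $t$ whenever $c\notin\mathcal{B}$.
   Context: A temporal feedback graph $\mathcal{S}$ is a collection of subsets $S_t\subseteq[T]\setminus\{t\}$. An order is a sequence $t_1,\dots,t_w$ with $t_u\in S_{t_v}$ for all $u<v$; maximal if no super-sequence is an order. Upper bound program: minimize $\sum_{c=1}^N\sqrt{\sum_{t\in C_c}\lambda_{c,t}^2}$ subject to $\sum_{c}\lambda_{c,t}=1$ for all $t\in[T]$, $\lambda_{c,t}=0$ if $t\notin C_c$, $\lambda_{c,t}\ge0$. Upper bound dual program: maximize $\sum_{t=1}^T\mu_t$ subject to $\sum_{t\in C_c}\mu_t^2\le1$ for all $c\in[N]$, $\mu_t\ge0$. *)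

From HB Require Import structures.
From mathcomp Require Import all_boot all_order all_algebra.
From mathcomp Require Import reals.
Set Implicit Arguments. Unset Strict Implicit. Unset Printing Implicit Defensive.
Import Order.TTheory GRing.Theory Num.Theory.
Local Open Scope ring_scope.

Definition temporal_feedback_graph (T : nat) (S : 'I_T -> {set 'I_T}) : Prop :=
  forall t, t \notin S t.

(* An order t_1,...,t_w: t_u ∈ S_{t_v} for all u < v.
   (x0 is only a default for nth; indices are always in range.) *)
Definition is_order (T : nat) (S : 'I_T -> {set 'I_T}) (s : seq 'I_T) : Prop :=
  forall (x0 : 'I_T) (u v : nat), (u < v)%N -> (v < size s)%N ->
    nth x0 s u \in S (nth x0 s v).

Definition is_maximal_order (T : nat) (S : 'I_T -> {set 'I_T}) (s : seq 'I_T) : Prop :=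
  is_order S s /\ forall s', subseq s s' -> is_order S s' -> s' = s.

Definition enumerates_maximal_orders (T N : nat) (S : 'I_T -> {set 'I_T})
    (C : 'I_N -> seq 'I_T) : Prop :=
  injective C /\ forall s, is_maximal_order S s <-> exists c, C c = s.

Definition ub_objective (R : realType) (T N : nat) (C : 'I_N -> seq 'I_T)
    (lam : 'I_N -> 'I_T -> R) : R :=
  \sum_(c < N) Num.sqrt (\sum_(t < T | t \in C c) lam c t ^+ 2).

Definition ub_feasible (R : realType) (T N : nat) (C : 'I_N -> seq 'I_T)
    (lam : 'I_N -> 'I_T -> R) : Prop :=
  (forall t, \sum_(c < N) lam c t = 1) /\
  (forall c t, t \notin C c -> lam c t = 0) /\
  (forall c t, 0 <= lam c t).

Definition ub_optimal (R : realType) (T N : nat) (C : 'I_N -> seq 'I_T)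
    (lam : 'I_N -> 'I_T -> R) : Prop :=
  ub_feasible C lam /\
  forall lam', ub_feasible C lam' -> ub_objective C lam <= ub_objective C lam'.

Definition dual_objective (R : realType) (T : nat) (mu : 'I_T -> R) : R :=
  \sum_(t < T) mu t.

Definition dual_feasible (R : realType) (T N : nat) (C : 'I_N -> seq 'I_T)
    (mu : 'I_T -> R) : Prop :=
  (forall c, \sum_(t < T | t \in C c) mu t ^+ 2 <= 1) /\ (forall t, 0 <= mu t).

Definition dual_optimal (R : realType) (T N : nat) (C : 'I_N -> seq 'I_T)
    (mu : 'I_T -> R) : Prop :=
  dual_feasible C mu /\
  forall mu', dual_feasible C mu' -> dual_objective mu' <= dual_objective mu.

Definition tight_set (R : realType) (T N : nat) (C : 'I_N -> seq 'I_T)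
    (mu : 'I_T -> R) : {set 'I_N} :=
  [set c | \sum_(t < T | t \in C c) mu t ^+ 2 == 1].

From mathcomp Require Import all_boot all_order all_algebra.
From mathcomp Require Import reals.
From mathcomp Require Import ring lra.
From Stdlib Require Import Classical.
Set Implicit Arguments. Unset Strict Implicit. Unset Printing Implicit Defensive.
Import Order.TTheory GRing.Theory Num.Theory.
Local Open Scope ring_scope.

(* The point is that the all-ones vector is a nonnegative combination of the
   tight constraint vectors [mu * 1_{C_c}].  Otherwise, by Farkas' lemma, some
   direction [d] increases [sum_t mu_t] while not increasing any tight
   constraint to first order; moving [mu] slightly along [d] (shrinking it a
   little to absorb the second-order terms) would then beat [mu], contradicting
   dual optimality.  By Caratheodory's theorem at most [T] coefficients [l_c] of
   such a combination are nonzero, and [lam_{c,t} = l_c mu_t] on [C_c] is a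
   primal feasible point of value [sum_c l_c = sum_t mu_t]; by weak duality
   (Cauchy-Schwarz) it is optimal. *)

Section Cones.
Variables (R : realFieldType) (T : nat).
Implicit Types (u v x y : 'I_T -> R).

Definition dot u v := \sum_t u t * v t.

Definition in_cone m (a : 'I_m -> 'I_T -> R) b :=
  exists2 l : 'I_m -> R, (forall i, 0 <= l i) & forall t, b t = \sum_i l i * a i t.

Definition supp m (l : 'I_m -> R) := [set i | l i != 0%R].

Lemma in_supp m (l : 'I_m -> R) i : (i \in supp l) = (l i != 0).
Proof. by rewrite inE. Qed.

Lemma dotC u v : dot u v = dot v u.
Proof. by apply: eq_bigr => t _; rewrite mulrC. Qed.

Lemma dotBl u v x k : dot (fun t => u t - k * v t) x = dot u x - k * dot v x.
Proof. by rewrite /dot mulr_sumr -sumrB; apply: eq_bigr => t _; ring. Qed.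

Lemma dotBr u v x k : dot x (fun t => u t - k * v t) = dot x u - k * dot x v.
Proof. by rewrite dotC dotBl !(dotC x). Qed.

Lemma dot_self_le0 u t : dot u u <= 0 -> u t = 0.
Proof.
move=> uu_le0; have uu0 : dot u u = 0.
  by apply/le_anti; rewrite uu_le0 sumr_ge0 // => i _; rewrite -expr2 sqr_ge0.
apply/eqP; rewrite -sqrf_eq0 expr2; apply/eqP.
by apply: (psumr_eq0P _ uu0) => // i _; rewrite -expr2 sqr_ge0.
Qed.

Definition proj_along v y u t := u t - dot u y / dot v y * v t.

Lemma dot_proj_along v y u x :
  dot (proj_along v y u) x = dot u (proj_along y v x).
Proof. by rewrite dotBl dotBr (dotC y v) (dotC x v); ring. Qed.

Lemma dot_proj_along_orth v y u : dot v y != 0 -> dot (proj_along v y u) y = 0.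
Proof. by move=> vy0; rewrite dotBl divfK ?subrr. Qed.

Lemma proj_along_sum m (a : 'I_m -> 'I_T -> R) (l : 'I_m -> R) v y b t :
  proj_along v y b t = \sum_j l j * proj_along v y (a j) t ->
  b t = (dot b y - \sum_j l j * dot (a j) y) / dot v y * v t + \sum_j l j * a j t.
Proof.
move=> PbE; rewrite -[b t](subrK (dot b y / dot v y * v t)) -/(proj_along v y b t).
rewrite PbE /proj_along; under eq_bigr do rewrite mulrBr; rewrite sumrB.
have -> : \sum_j l j * (dot (a j) y / dot v y * v t) =
    (\sum_j l j * dot (a j) y) / dot v y * v t.
  by rewrite !mulr_suml; apply: eq_bigr => j _; ring.
ring.
Qed.

Lemma in_cone_cons m (a : 'I_m.+1 -> 'I_T -> R) b (l : 'I_m -> R) k :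
  (forall j, 0 <= l j) -> 0 <= k ->
  (forall t, b t = k * a ord0 t + \sum_j l j * a (lift ord0 j) t) -> in_cone a b.
Proof.
move=> l_ge0 k_ge0 bE; exists (fun i => if unlift ord0 i is Some j then l j else k).
  by move=> i; case: (unliftP ord0 i).
by move=> t; rewrite bE big_ord_recl unlift_none; under [in RHS]eq_bigr do rewrite liftK.
Qed.

Lemma farkas m (a : 'I_m -> 'I_T -> R) b :
  (forall x, (forall i, dot (a i) x <= 0) -> dot b x <= 0) -> in_cone a b.
Proof.
elim: m a b => [|m IH] a b Hab.
  exists (fun=> 0) => // t; rewrite big_ord0.
  by apply: dot_self_le0; apply: Hab => -[].
pose a' j := a (lift ord0 j).
case: (classic (forall x, (forall j, dot (a' j) x <= 0) -> dot b x <= 0)) => [Hb|].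
  have [l l0 bE] := IH a' b Hb; apply: (in_cone_cons l0 (lexx 0)) => t.
  by rewrite bE mul0r add0r.
move=> /not_all_ex_not[y not_Hb]; have [a'y /negP] := imply_to_and _ _ not_Hb.
rewrite -ltNge => by_gt0; pose q := dot (a ord0) y.
have q_gt0 : 0 < q.
  rewrite ltNge; apply: contraL by_gt0 => q_le0; rewrite -leNgt; apply: Hab => i.
  by case: (unliftP ord0 i) => [j|] ->; [apply: a'y | apply: q_le0].
(* Projecting along [a ord0] onto the hyperplane orthogonal to [y] removes
   one generator, and the projected problem satisfies the hypothesis. *)
pose P := proj_along (a ord0) y.
have [l l0 PbE] : in_cone (fun j => P (a' j)) (P b).
  apply: IH => x Px; rewrite dot_proj_along Hab // => i.
  case: (unliftP ord0 i) => [j|] ->; first by rewrite -dot_proj_along; apply: Px.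
  by rewrite dotC dot_proj_along_orth // dotC gt_eqF.
apply: (in_cone_cons l0 (k := (dot b y - \sum_j l j * dot (a' j) y) / q)).
  apply: divr_ge0 (ltW q_gt0); rewrite subr_ge0; apply: le_trans (ltW by_gt0).
  by apply: sumr_le0 => j _; apply: mulr_ge0_le0.
by move=> t; apply: proj_along_sum.
Qed.

Lemma exists_lin_dep m (a : 'I_m -> 'I_T -> R) (A : {set 'I_m}) : (T < #|A|)%N ->
  exists w : 'I_m -> R, [/\ exists i, w i != 0, forall i, i \notin A -> w i = 0 &
     forall t, \sum_i w i * a i t = 0].
Proof.
move=> T_lt_A; have [i0 i0A] : exists i0, i0 \in A.
  by apply/card_gt0P; apply: leq_ltn_trans T_lt_A.
pose M : 'M[R]_(#|A|, T) := \matrix_(j, t) a (enum_val j) t.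
have /rowV0Pn[v /sub_kermxP vM0 /rV0Pn[j vj]] : kermx M != 0.
  by rewrite kermx_eq0 -row_leq_rank -ltnNge (leq_ltn_trans (rank_leq_col M)).
exists (fun i => if i \in A then v 0 (enum_rank_in i0A i) else 0); split.
- by exists (enum_val j); rewrite enum_valP enum_valK_in.
- by move=> i /negbTE ->.
- move=> t; rewrite (bigID (mem A)) /= [X in _ + X]big1 ?addr0; last first.
    by move=> i /negbTE ->; rewrite mul0r.
  under eq_bigr => i iA do rewrite iA.
  rewrite big_enum_val /=; transitivity ((v *m M) 0 t); last by rewrite vM0 mxE.
  rewrite mxE.
  by apply: eq_bigr => k _; rewrite (enum_valK_in i0A) !mxE.
Qed.

Lemma caratheodory_step m (a : 'I_m -> 'I_T -> R) b l :
  (forall i, 0 <= l i) -> (forall t, b t = \sum_i l i * a i t) ->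
  (T < #|supp l|)%N ->
  exists l', [/\ forall i, 0 <= l' i, forall t, b t = \sum_i l' i * a i t &
    supp l' \proper supp l].
Proof.
move=> l_ge0 bE /(exists_lin_dep a)[w [[i1 wi1] w_supp w_dep]].
wlog w_pos : w wi1 w_supp w_dep / 0 < w i1.
  move=> wlog_w; case: (ltgtP (w i1) 0) => [w_neg|w_pos|w_eq0].
  - apply: (wlog_w (fun i => - w i)); rewrite ?oppr_eq0 ?oppr_gt0 //.
      by move=> i /w_supp ->; rewrite oppr0.
    by move=> t; under eq_bigr do rewrite mulNr; rewrite sumrN w_dep oppr0.
  - exact: (wlog_w w).
  - by rewrite w_eq0 eqxx in wi1.
have w0 i : l i = 0 -> w i = 0 by move=> li0; apply: w_supp; rewrite in_supp li0 eqxx.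
(* Move from [l] along [-w] until the first coordinate hits zero. *)
have [i0 wi0 i0_min] := arg_minP (fun i => l i / w i) (P := fun i => 0 < w i) w_pos.
pose th := l i0 / w i0; pose l' i := l i - th * w i.
exists l'; split.
- move=> i; rewrite subr_ge0; case: (ltP 0 (w i)) => [wi|wi].
    by rewrite -ler_pdivlMr // i0_min.
  by apply: le_trans (l_ge0 i); rewrite mulr_ge0_le0 // divr_ge0 // ltW.
- move=> t; rewrite bE; under [RHS]eq_bigr do rewrite mulrBl -mulrA.
  by rewrite sumrB -mulr_sumr w_dep mulr0 subr0.
- apply/properP; split.
    apply/subsetP => i; rewrite !in_supp; apply: contra => /eqP li0.
    by rewrite /l' li0 w0 // mulr0 subrr.
  exists i0; first by rewrite in_supp; apply: contraTneq wi0 => /w0 ->; rewrite ltxx.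
  by rewrite in_supp negbK /l' /th divfK ?subrr // gt_eqF.
Qed.

Lemma caratheodory m (a : 'I_m -> 'I_T -> R) b l :
  (forall i, 0 <= l i) -> (forall t, b t = \sum_i l i * a i t) ->
  exists l', [/\ forall i, 0 <= l' i, forall t, b t = \sum_i l' i * a i t &
    (#|supp l'| <= T)%N].
Proof.
have [n] := ubnP #|supp l|; elim: n l => // n IH l l_lt l_ge0 bE.
case: (leqP #|supp l| T) => [|T_lt]; first by exists l.
have [l' [l'_ge0 bE' /proper_card l'_supp]] := caratheodory_step l_ge0 bE T_lt.
by apply: (IH l') => //; apply: leq_trans l'_supp l_lt.
Qed.

End Cones.

Lemma sumr_pred_le (R : numDomainType) (I : finType) (P : pred I) (F : I -> R) :
  (forall i, 0 <= F i) -> \sum_(i | P i) F i <= \sum_i F i.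
Proof. by move=> F_ge0; rewrite [leRHS](bigID P) /= lerDl sumr_ge0. Qed.

Lemma sumr_sqr_lincomb (R : comPzRingType) (I : finType) (P : pred I)
    (f g : I -> R) x y :
  \sum_(i | P i) (x * f i + y * g i) ^+ 2 =
  x ^+ 2 * \sum_(i | P i) f i ^+ 2 + 2 * x * y * \sum_(i | P i) f i * g i
  + y ^+ 2 * \sum_(i | P i) g i ^+ 2.
Proof. by rewrite !mulr_sumr -!big_split; apply: eq_bigr => i _ /=; ring. Qed.

Lemma sum_mul_le_sqrt (R : rcfType) (I : finType) (P : pred I) (f g : I -> R) :
  \sum_(i | P i) g i ^+ 2 <= 1 ->
  \sum_(i | P i) f i * g i <= Num.sqrt (\sum_(i | P i) f i ^+ 2).
Proof.
move=> g_le1; set L := Num.sqrt _.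
have f2_ge0 : 0 <= \sum_(i | P i) f i ^+ 2 by rewrite sumr_ge0 // => i _; rewrite sqr_ge0.
have LL : L ^+ 2 = \sum_(i | P i) f i ^+ 2 by rewrite sqr_sqrtr.
have [L0|L_neq0] := eqVneq L 0.
  have f2_0 : \sum_(i | P i) f i ^+ 2 = 0 by rewrite -LL L0 expr0n.
  rewrite L0 big1 // => i Pi; have /eqP : f i ^+ 2 = 0.
    by apply: (psumr_eq0P _ f2_0) => // j _; rewrite sqr_ge0.
  by rewrite sqrf_eq0 => /eqP ->; rewrite mul0r.
have L_gt0 : 0 < L by rewrite lt_neqAle eq_sym L_neq0 sqrtr_ge0.
(* AM-GM termwise: [2 L f g <= f^2 + L^2 g^2]. *)
have : 2 * L * \sum_(i | P i) f i * g i <= 2 * L * L.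
  apply: (@le_trans _ _ (\sum_(i | P i) f i ^+ 2 + L ^+ 2 * \sum_(i | P i) g i ^+ 2)).
    rewrite !mulr_sumr -big_split /=; apply: ler_sum => i _.
    by have := sqr_ge0 (f i - L * g i); lra.
  by rewrite -LL; have := ler_wpM2l (sqr_ge0 L) g_le1; lra.
by rewrite ler_pM2l // mulr_gt0.
Qed.

Lemma exists_uniform_gap (R : realDomainType) (I : finType) (s : I -> R) :
  exists2 g : R, 0 < g & forall i, s i < 1 -> s i <= 1 - g.
Proof.
case: (pickP (fun i => s i < 1)) => [i0 si0|none]; last first.
  by exists 1 => // i; rewrite none.
have [i si_lt1 i_max] := arg_maxP s (P := fun i => s i < 1) si0.
by exists (1 - s i) => [|j /i_max]; rewrite ?subr_gt0 // opprB addrC subrK.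
Qed.

Lemma exists_small_pos (R : realFieldType) (a b c x y z : R) :
  0 <= a -> 0 <= b -> 0 <= c -> 0 < x -> 0 < y -> 0 < z ->
  exists2 e, 0 < e & [/\ e * (a + 1) <= x, e * (b + 1) <= y & e * (c + 1) <= z].
Proof.
move=> a_ge0 b_ge0 c_ge0 x_gt0 y_gt0 z_gt0.
have K_gt0 (k : R) : 0 <= k -> 0 < k + 1 by move=> k_ge0; lra.
exists (Num.min (Num.min (x / (a + 1)) (y / (b + 1))) (z / (c + 1))).
  by rewrite !lt_min !divr_gt0 ?K_gt0.
by split; rewrite -ler_pdivlMr ?K_gt0 // !ge_min lexx ?orbT.
Qed.

Lemma perturbed_sqr_le1 (R : realFieldType) (s p q e D P g : R) :
  0 <= s -> `|p| <= P -> 0 <= q <= D -> 0 < e -> e * (D + 1) <= 1 ->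
  (s = 1 /\ p <= 0) \/ (s <= 1 - g /\ e * (2 * P + D) <= g) ->
  (1 - e ^+ 2 * D) ^+ 2 * s + 2 * (1 - e ^+ 2 * D) * e * p + e ^+ 2 * q <= 1.
Proof.
move=> s_ge0 p_le /andP[q_ge0 q_le] e_gt0 e_small.
set dl := e ^+ 2 * D.
have eD_le1 : e * D <= 1 by nra.
have D_ge0 : 0 <= D := le_trans q_ge0 q_le.
have dl_ge0 : 0 <= dl by rewrite mulr_ge0 ?sqr_ge0.
have dl_le_e : dl <= e by rewrite /dl; nra.
have eq_le : e ^+ 2 * q <= dl by rewrite ler_wpM2l ?sqr_ge0.
have e_le1 : e <= 1 by nra.
case=> [[-> p_le0]|[s_le g_ge]].
  (* On a tight constraint the value is at most [(1 - dl)^2 + dl <= 1]. *)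
  have : (1 - dl) * e * p <= 0 by apply: mulr_ge0_le0 => //; apply: mulr_ge0; lra.
  nra.
have ps_le : (1 - dl) * p <= P.
  apply: le_trans (ler_norm _) _; rewrite normrM ger0_norm; last lra.
  by apply: le_trans p_le; rewrite ler_piMl ?normr_ge0 //; lra.
have s_term : (1 - dl) ^+ 2 * s <= s by rewrite ler_piMl // expr2; nra.
have p_term : e * ((1 - dl) * p) <= e * P by rewrite ler_pM2l.
have q_term : e ^+ 2 * q <= e * D.
  have eD_ge0 : 0 <= e * D by rewrite mulr_ge0 // ltW.
  by rewrite /dl in eq_le; nra.
lra.
Qed.

Section DualPerturbation.
Variables (R : realType) (T N : nat) (C : 'I_N -> seq 'I_T) (mu d : 'I_T -> R).

Let D := \sum_t d t ^+ 2.
Let P := \sum_t `|mu t * d t|.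

(* The factor [1 - e^2 D] absorbs the second-order term [e^2 sum d^2] on tight
   constraints; the absolute value restores nonnegativity without changing the
   constraints and only increases the objective. *)
Definition dual_perturbation (e : R) t := `|(1 - e ^+ 2 * D) * mu t + e * d t|.

Lemma dual_perturbation_objective e :
  (1 - e ^+ 2 * D) * dual_objective mu + e * \sum_t d t <=
  dual_objective (dual_perturbation e).
Proof.
rewrite /dual_objective [_ * \sum_t mu t]mulr_sumr [e * _]mulr_sumr -big_split /=.
by apply: ler_sum => t _; apply: ler_norm.
Qed.

Lemma dual_perturbation_feasible e g :
  dual_feasible C mu ->
  (forall c, c \in tight_set C mu -> \sum_(t < T | t \in C c) mu t * d t <= 0) ->
  (forall c, c \notin tight_set C mu -> \sum_(t < T | t \in C c) mu t ^+ 2 <= 1 - g) ->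
  0 < e -> e * (D + 1) <= 1 -> e * (2 * P + D) <= g ->
  dual_feasible C (dual_perturbation e).
Proof.
move=> [mu_feas _] d_tight mu_slack e_gt0 e_small e_gap.
split=> [c|t]; last exact: normr_ge0.
under eq_bigr do rewrite /dual_perturbation real_normK ?num_real //.
rewrite sumr_sqr_lincomb; apply: perturbed_sqr_le1 e_gt0 e_small _.
- by rewrite sumr_ge0 // => t _; rewrite sqr_ge0.
- by apply: le_trans (ler_norm_sum _ _ _) (sumr_pred_le _ _).
- rewrite sumr_ge0 /= => [|t _]; last by rewrite sqr_ge0.
  by apply: sumr_pred_le => t; rewrite sqr_ge0.
have [c_tight|c_slack] := boolP (c \in tight_set C mu).
  by left; split; [apply/eqP; rewrite inE in c_tight | exact: d_tight].
by right; split; [exact: mu_slack | exact: e_gap].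
Qed.

End DualPerturbation.

Lemma dual_optimal_no_ascent (R : realType) (T N : nat) (C : 'I_N -> seq 'I_T)
    (mu d : 'I_T -> R) :
  dual_optimal C mu ->
  (forall c, c \in tight_set C mu -> \sum_(t < T | t \in C c) mu t * d t <= 0) ->
  \sum_t d t <= 0.
Proof.
move=> [mu_feas mu_opt] d_tight; have [//|d_pos] := leP (\sum_t d t) 0.
have [g g_gt0 g_gap] := exists_uniform_gap (fun c => \sum_(t < T | t \in C c) mu t ^+ 2).
have mu_slack c : c \notin tight_set C mu -> \sum_(t < T | t \in C c) mu t ^+ 2 <= 1 - g.
  by rewrite inE => c_slack; apply: g_gap; rewrite lt_neqAle c_slack mu_feas.1.
set D := \sum_t d t ^+ 2; set P := \sum_t `|mu t * d t|; set S := dual_objective mu.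
have D_ge0 : 0 <= D by rewrite sumr_ge0 // => t _; rewrite sqr_ge0.
have P_ge0 : 0 <= P by rewrite sumr_ge0.
have S_ge0 : 0 <= S by rewrite sumr_ge0 // => t _; apply: mu_feas.2.
have PD_ge0 : 0 <= 2 * P + D by lra.
have [e e_gt0 [e_small e_gap1 e_ascent]] :=
  exists_small_pos D_ge0 PD_ge0 (mulr_ge0 D_ge0 S_ge0) ltr01 g_gt0 d_pos.
have e_gap : e * (2 * P + D) <= g by nra.
have S_lt : S < dual_objective (dual_perturbation mu d e).
  apply: lt_le_trans (dual_perturbation_objective _ _ _); rewrite -/D -/S.
  have : 0 < e * (\sum_t d t - e * (D * S)) by rewrite mulr_gt0 //; nra.
  nra.
have := mu_opt _ (dual_perturbation_feasible mu_feas d_tight mu_slack e_gt0 e_small e_gap).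
by rewrite leNgt S_lt.
Qed.

Section PrimalCertificate.
Variables (R : realType) (T N : nat) (C : 'I_N -> seq 'I_T) (mu : 'I_T -> R).

Definition tight_vec c t : R :=
  if (c \in tight_set C mu) && (t \in C c) then mu t else 0.

Lemma dot_tight_vec c x : c \in tight_set C mu ->
  dot (tight_vec c) x = \sum_(t < T | t \in C c) mu t * x t.
Proof.
move=> c_tight; rewrite [RHS]big_mkcond; apply: eq_bigr => t _.
by rewrite /tight_vec c_tight /=; case: (t \in C c); rewrite ?mul0r.
Qed.

Lemma ub_feasible_dual_objective lam : ub_feasible C lam ->
  \sum_c \sum_(t < T | t \in C c) lam c t * mu t = dual_objective mu.
Proof.
move=> [lam_sum1 [lam_supp _]]; rewrite /dual_objective.
have lam_on c : \sum_(t < T | t \in C c) lam c t * mu t = \sum_t lam c t * mu t.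
  rewrite [RHS](bigID (mem (C c))) /= [X in _ + X]big1 ?addr0 // => t /lam_supp ->.
  by rewrite mul0r.
under eq_bigr do rewrite lam_on.
by rewrite exchange_big; apply: eq_bigr => t _; rewrite -mulr_suml lam_sum1 mul1r.
Qed.

Lemma weak_duality lam : ub_feasible C lam -> dual_feasible C mu ->
  dual_objective mu <= ub_objective C lam.
Proof.
move=> lam_feas [mu_feas _]; rewrite -(ub_feasible_dual_objective lam_feas).
by apply: ler_sum => c _; apply: sum_mul_le_sqrt.
Qed.

Lemma ub_objective_tight_comb (l : 'I_N -> R) :
  (forall c, 0 <= l c) -> ub_feasible C (fun c t => l c * tight_vec c t) ->
  ub_objective C (fun c t => l c * tight_vec c t) = dual_objective mu.
Proof.
move=> l_ge0 lam_feas; rewrite -(ub_feasible_dual_objective lam_feas).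
apply: eq_bigr => c _; have [c_tight|c_slack] := boolP (c \in tight_set C mu).
  have mu_norm1 : \sum_(t < T | t \in C c) mu t ^+ 2 = 1.
    by apply/eqP; rewrite inE in c_tight.
  have lamE t : t \in C c -> l c * tight_vec c t = l c * mu t.
    by rewrite /tight_vec c_tight => ->.
  under eq_bigr => t ct do rewrite lamE // exprMn.
  under [RHS]eq_bigr => t ct do rewrite lamE // -mulrA -expr2.
  by rewrite -!mulr_sumr mu_norm1 !mulr1 sqrtr_sqr ger0_norm.
rewrite !big1 ?sqrtr0 // => t _; rewrite /tight_vec (negbTE c_slack) mulr0 ?mul0r //.
by rewrite expr0n.
Qed.

Lemma ub_optimal_tight_comb (l : 'I_N -> R) :
  dual_feasible C mu -> (forall c, 0 <= l c) ->
  (forall t, \sum_c l c * tight_vec c t = 1) ->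
  ub_optimal C (fun c t => l c * tight_vec c t).
Proof.
move=> mu_feas l_ge0 l_sum1.
have lam_feas : ub_feasible C (fun c t => l c * tight_vec c t).
  split=> [//|]; split=> [c t t_notin|c t]; rewrite /tight_vec.
    by rewrite (negbTE t_notin) andbF mulr0.
  by case: ifP => _; rewrite mulr_ge0 // mu_feas.2.
split=> // lam' lam'_feas; rewrite ub_objective_tight_comb //.
exact: weak_duality.
Qed.

End PrimalCertificate.

Theorem lemma4 (R : realType) (T N : nat) (S : 'I_T -> {set 'I_T})
    (C : 'I_N -> seq 'I_T) (mu : 'I_T -> R) :
  temporal_feedback_graph S ->
  enumerates_maximal_orders S C ->
  dual_optimal C mu ->
  exists B : {set 'I_N},
    [/\ B \subset tight_set C mu, (#|B| <= T)%N &
      exists lam : 'I_N -> 'I_T -> R,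
        ub_optimal C lam /\ (forall c, c \notin B -> forall t, lam c t = 0)].
Proof.
move=> _ _ mu_opt.
have [l l_ge0 l_sum1] : in_cone (tight_vec C mu) (fun=> 1).
  apply: farkas => x x_tight; rewrite /dot; under eq_bigr do rewrite mul1r.
  by apply: (dual_optimal_no_ascent mu_opt) => c c_tight; rewrite -dot_tight_vec.
have [l' [l'_ge0 l'_sum1 l'_supp]] := caratheodory l_ge0 l_sum1.
exists (tight_set C mu :&: supp l'); split.
- exact: subsetIl.
- exact: leq_trans (subset_leq_card (subsetIr _ _)) l'_supp.
exists (fun c t => l' c * tight_vec C mu c t); split.
  by apply: (ub_optimal_tight_comb mu_opt.1 l'_ge0) => t; rewrite -l'_sum1.
move=> c; rewrite in_setI in_supp negb_and negbK => /orP[c_slack t|/eqP l'c0 t].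
- by rewrite /tight_vec (negbTE c_slack) mulr0.
- by rewrite l'c0 mul0r.
Qed.
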